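(* Let $r\in\mathbb N$ and let $M$ be the sub-add move matrix. Every vertex in $\mathcal P_0$ has no parent in $\Gamma_{M,\,2^r}$.
   Context: The sub-add move matrix is $M=\begin{pmatrix}1&-1\\1&1\end{pmatrix}$. For $n\in\mathbb N$, $\Gamma_{M,\,n}$ is the directed graph with vertex set $\mathbb Z_n^2$ and arcs $((a,b),(a-b,a+b))$ for all $(a,b)\in\mathbb Z_n^2$ (computed mod $n$). If $({\bf v},{\bf w})$ is an arc, ${\bf v}$ is a parent of ${\bf w}$. $\mathcal P_0$ is the set of $(x,y)\in\mathbb Z_{2^r}^2$ such that exactly one of $x,y$ is odd (parity of elements of $\mathbb Z_{2^r}$ being well defined). *)

From mathcomp Require Import all_boot.
Set Implicit Arguments. Unset Strict Implicit. Unset Printing Implicit Defensive.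

(* Vertices of Gamma_{M,n}: Z_n^2, with Z_n represented as 'I_n
   (residues 0..n-1).  The sub-add move matrix M = [[1,-1],[1,1]] sends
   (a,b) to (a-b, a+b) computed mod n; subtraction a-b mod n is computed
   as (a + (n - b)) mod n on the residues. *)
Definition vertex (n : nat) := ('I_n * 'I_n)%type.

Definition subadd_move (n : nat) (v : vertex n) : nat * nat :=
  (((v.1 : nat) + (n - v.2)) %% n, ((v.1 : nat) + v.2) %% n).

Definition arc (n : nat) (v w : vertex n) : Prop :=
  subadd_move v = ((w.1 : nat), (w.2 : nat)).

Definition is_parent (n : nat) (v w : vertex n) : Prop := arc v w.

Definition P0 (r : nat) (w : vertex (2 ^ r)) : bool :=
  odd w.1 (+) odd w.2.

From mathcomp Require Import all_boot.

(* Modulo an even n, reduction preserves parity, and a - b and a + b have the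
   same parity; so both coordinates of M v share the parity of a + b, which
   puts M v outside P_0.  For n = 2^0 = 1 the only vertex is (0,0), which is
   not in P_0. *)

Lemma odd_subadd_move {n : nat} (v : vertex n) :
  ~~ odd n -> odd (subadd_move v).1 = odd (subadd_move v).2.
Proof.
case: v => [[a _] [b lt_bn]] /negbTE even_n /=.
rewrite !odd_mod // !oddD oddB ?(ltnW lt_bn) // even_n.
by case: (odd a); case: (odd b).
Qed.

Lemma is_parent_odd_eq {n : nat} (v w : vertex n) :
  ~~ odd n -> is_parent v w -> odd w.1 = odd w.2.
Proof.
by move=> even_n move_v; have := odd_subadd_move v even_n; rewrite move_v.
Qed.

Lemma P0_expn0 (w : vertex (2 ^ 0)) : P0 w = false.
Proof. by case: w => [[[|?] ?] [[|?] ?]]. Qed.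

Theorem proposition5p3 (r : nat) (w : vertex (2 ^ r)) :
  P0 w -> forall v : vertex (2 ^ r), ~ is_parent v w.
Proof.
case: r w => [|r] w; first by rewrite P0_expn0.
move=> P0w v /is_parent_odd_eq; rewrite oddX /= => /(_ isT) odd_eq.
by move: P0w; rewrite /P0 odd_eq addbb.
Qed.
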